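(* Let $\check\lambda\in Y$ and let $a$ be a simple root with simple coroot $\check a$, and write $m=n(\check a)$. Then, for the operator $\widetilde{\mathbf{T}}_a$ on $\mathbb{Z}_{\tau,\mathbb{g}}[Y]$ defined below: (1) If $\langle\check\lambda+\check\rho,a\rangle\ge0$ and $\langle\check\lambda+\check\rho,a\rangle\equiv0\bmod m$, then $(Y_{\check\lambda}+Y_{\check\lambda\bullet s_a})\widetilde{\mathbf{T}}_a=-(Y_{\check\lambda}+Y_{\check\lambda\bullet s_a})$. (2) If $0<\langle\check\lambda+\check\rho,a\rangle<m$, then, with $g=\mathbb{g}_{\langle\check\lambda+\check\rho,a\rangle\mathsf{Q}(\check a)}$, $(Y_{\check\lambda}-g\,Y_{\check\lambda\bullet s_a})\widetilde{\mathbf{T}}_a=-(Y_{\check\lambda}-g\,Y_{\check\lambda\bullet s_a})$. (3) If $j:=\langle\check\lambda+\check\rho,a\rangle>m$ and $j\not\equiv0\bmod m$, then setting $\check\lambda^{(1)}=\check\lambda-\mathrm{res}_m(j)\,\check a$ and $g=\mathbb{g}_{j\mathsf{Q}(\check a)}$, the element $u=Y_{\check\lambda}-g\,Y_{\check\lambda\bullet s_a}-g\,Y_{\check\lambda^{(1)}}+Y_{\check\lambda^{(1)}\bullet s_a}$ satisfies $u\,\widetilde{\mathbf{T}}_a=-u$.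
   Context: Let $(Y,\{\check a_i\}_{i\in I},X,\{a_i\}_{i\in I})$ be a root datum with finite-type Cartan matrix $(a_{ij})$, i.e. $Y,X$ are dual lattices with $\langle\check a_i,a_j\rangle=a_{ij}$. The Weyl group $W$ acts on $Y$ (written on the right) by $\check\lambda\cdot s_i=\check\lambda-\langle\check\lambda,a_i\rangle\check a_i$. Let $\check\rho\in Y\otimes\mathbb{Q}$ be half the sum of the positive coroots, so $\langle\check\rho,a_i\rangle=1$; for a simple root $a$ set $\check\lambda\bullet s_a=\check\lambda-\langle\check\lambda+\check\rho,a\rangle\check a\in Y$. Fix an integer $n\ge1$ and a $W$-invariant $\mathbb{Z}$-valued quadratic form $\mathsf{Q}$ on $Y$; for a simple coroot $\check a$, $n(\check a)$ is the smallest positive integer with $n(\check a)\mathsf{Q}(\check a)\equiv0\bmod n$. (Standing assumption: the associated twisted root datum is simply connected.) For a positive integer $m$, $\mathrm{res}_m:\mathbb{Z}\to\{0,\dots,m-1\}$ is the residue map. Let $\mathbb{Z}_{\tau,\mathbb{g}}=\mathbb{Z}[\tau^{\pm1},\{\mathbb{g}_k\}_{k\in\mathbb{Z}}]$ modulo the relations $\mathbb{g}_k=\mathbb{g}_l$ if $k\equiv l\bmod n$, $\mathbb{g}_k\mathbb{g}_{-k}=\tau^2$ if $k\not\equiv0\bmod n$, and $\mathbb{g}_0=-1$. In the group algebra $\mathbb{Z}_{\tau,\mathbb{g}}[Y]$ (basis $Y_{\check\mu}$, $\check\mu\in Y$), define the $\mathbb{Z}_{\tau,\mathbb{g}}$-linear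 operator $\widetilde{\mathbf{T}}_a$ (written on the right), for $m=n(\check a)$, by $Y_{\check\lambda}\widetilde{\mathbf{T}}_a=\mathbb{g}_{\langle\check\lambda+\check\rho,a\rangle\mathsf{Q}(\check a)}Y_{\check\lambda\bullet s_a}+(\tau^2-1)\sum_{k\ge0,\ km\le\langle\check\lambda,a\rangle}Y_{\check\lambda-km\check a}$ if $\langle\check\lambda,a\rangle\ge0$, and $Y_{\check\lambda}\widetilde{\mathbf{T}}_a=\mathbb{g}_{\langle\check\lambda+\check\rho,a\rangle\mathsf{Q}(\check a)}Y_{\check\lambda\bullet s_a}+(1-\tau^2)\sum_{k>0,\ km<-\langle\check\lambda,a\rangle}Y_{\check\lambda+km\check a}$ if $\langle\check\lambda,a\rangle<0$ (the metaplectic Demazure–Lusztig operator). *)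

From HB Require Import structures.
From mathcomp Require Import all_boot all_order all_algebra.
From mathcomp Require Import finmap.
From mathcomp.multinomials Require Import monalg.

Set Implicit Arguments.
Unset Strict Implicit.
Unset Printing Implicit Defensive.

Import Order.TTheory GRing.Theory Num.Theory.
Local Open Scope ring_scope.

(* Root datum.  The cocharacter lattice Y is Z^r (row vectors), the     *)
(* character lattice X is Z^r as well, dual to Y via the standard       *)
(* perfect pairing <y, x> = sum_k y_k x_k.                               *)

Definition lat (r : nat) := 'rV[int]_r.

Definition dpair (r : nat) (y x : lat r) : int := (y *m x^T) 0 0.

Definition sref (r : nat) (ac al : lat r) (y : lat r) : lat r :=
  y - dpair y al *: ac.

Definition cartan (r : nat) (I : finType) (ac al : I -> lat r) (i j : I) : int :=
  dpair (ac i) (al j).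

Definition finite_type_cartan (I : finType) (A : I -> I -> int) : Prop :=
  [/\ (forall i, A i i = 2),
      (forall i j, i != j -> A i j <= 0),
      (forall i j, A i j = 0 <-> A j i = 0) &
      exists d : I -> rat,
        [/\ (forall i, 0 < d i),
            (forall i j, d i * (A i j)%:~R = d j * (A j i)%:~R) &
            (forall v : I -> rat, (exists i, v i != 0) ->
               0 < \sum_(i : I) \sum_(j : I) v i * d i * (A i j)%:~R * v j)]].

Definition bilQ (r : nat) (Q : lat r -> int) (y z : lat r) : int :=
  Q (y + z) - Q y - Q z.

Definition quadratic_form (r : nat) (Q : lat r -> int) : Prop :=
  (forall (k : int) (y : lat r), Q (k *: y) = k ^+ 2 * Q y) /\
  (forall y1 y2 z : lat r, bilQ Q (y1 + y2) z = bilQ Q y1 z + bilQ Q y2 z).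

(* W-invariance (W is generated by the simple reflections) *)
Definition W_invariant (r : nat) (I : finType) (ac al : I -> lat r)
  (Q : lat r -> int) : Prop :=
  forall (i : I) (y : lat r), Q (sref (ac i) (al i) y) = Q y.

(* n(a^vee): smallest positive integer m with m Q(a^vee) = 0 mod n (n >= 1) *)
Lemma nco_ex (n : nat) (q : int) :
  exists m : nat, (0 < m)%N && ((n.+1)%:Z %| m%:Z * q)%Z.
Proof. by exists n.+1; rewrite /= dvdz_mulr. Qed.

Definition nco (n : nat) (q : int) : nat :=
  if n is n'.+1 then ex_minn (nco_ex n' q) else 1%N.

Definition in_YQn (r : nat) (n : nat) (Q : lat r -> int) (y : lat r) : Prop :=
  forall y' : lat r, (n%:Z %| bilQ Q y y')%Z.

Definition twisted_simply_connected (r : nat) (I : finType) (n : nat)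
  (Q : lat r -> int) (ac : I -> lat r) : Prop :=
  forall y : lat r, in_YQn n Q y ->
    exists c : I -> int, y = \sum_(i : I) c i *: ((nco n (Q (ac i)))%:Z *: ac i).

(* <lambda + rho^vee, a> for a simple root a, using <rho^vee, a> = 1     *)
Definition pairrho (r : nat) (lam al : lat r) : int := dpair lam al + 1.

Definition dotref (r : nat) (ac al : lat r) (lam : lat r) : lat r :=
  lam - pairrho lam al *: ac.

(* Relations of Z_{tau,g}: any commutative ring R with tau invertible and *)
(* g : Z -> R satisfying the defining relations.                          *)
Definition ztaug_rel (R : comNzRingType) (n : nat) (tau : R) (g : int -> R) : Prop :=
  [/\ (exists tau_inv : R, tau * tau_inv = 1),
      (forall k l : int, (k == l %[mod n%:Z])%Z -> g k = g l),
      (forall k : int, (k != 0 %[mod n%:Z])%Z -> g k * g (- k) = tau ^+ 2) &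
      g 0 = -1].

Definition Yb (R : ringType) (r : nat) (mu : lat r) : {malg R[lat r]} := << mu >>.

Definition Tbasis (R : comNzRingType) (tau : R) (g : int -> R) (n : nat) (r : nat)
  (Q : lat r -> int) (ac al : lat r) (lam : lat r) : {malg R[lat r]} :=
  let m := nco n (Q ac) in
  let N := dpair lam al in
  let gg := g (pairrho lam al * Q ac) in
  if 0 <= N then
    gg *: Yb R (dotref ac al lam)
    + (tau ^+ 2 - 1) *: \sum_(k < `|N|.+1 | (k * m <= `|N|)%N)
                            Yb R (lam - (k * m)%:Z *: ac)
  else
    gg *: Yb R (dotref ac al lam)
    + (1 - tau ^+ 2) *: \sum_(k < `|N|.+1 | (0 < k)%N && (k * m < `|N|)%N)
                            Yb R (lam + (k * m)%:Z *: ac).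

(* linear extension: the operator T~_a on R[Y] (written on the right) *)
Definition Tmeta (R : comNzRingType) (tau : R) (g : int -> R) (n : nat) (r : nat)
  (Q : lat r -> int) (ac al : lat r) (f : {malg R[lat r]}) : {malg R[lat r]} :=
  \sum_(mu <- msupp f) f@_mu *: Tbasis tau g n Q ac al mu.

From HB Require Import structures.
From mathcomp Require Import all_boot all_order all_algebra.
From mathcomp Require Import finmap.
From mathcomp.multinomials Require Import monalg.
From mathcomp Require Import zify ring.
Import Order.TTheory GRing.Theory Num.Theory.
Local Open Scope ring_scope.

(* Everything happens on the a-string Z_t = Y_(lam - t a^vee), t in Z.  Writing
   j = <lam + rho^vee, a>, the operator sends Z_t to g_((j-2t)Q(a^vee)) Z_(j-t) plus
   (tau^2 - 1) times a sum of Z_s over an arithmetic progression of step m = n(a^vee):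
   s = t, t + m, ... when j - 1 - 2t >= 0, and s = t - m, t - 2m, ... (with the
   opposite sign) otherwise.  In each of the three cases the vectors involved form a
   small stable configuration in which the two progressions produced by paired terms
   coincide and cancel, and the relations g_k g_(-k) = tau^2 (m does not divide k) and
   g_(km Q(a^vee)) = -1 (because m Q(a^vee) = 0 mod n) turn what is left into -u. *)

Lemma nco_gt0 n q : (0 < nco n q)%N.
Proof. by case: n => //= n; case: ex_minnP => m /andP[]. Qed.

Lemma dvdz_mul_nco n q (x : int) : (0 < n)%N ->
  (n%:Z %| x * q)%Z = ((nco n q)%:Z %| x)%Z.
Proof.
case: n => // n _ /=; case: ex_minnP => m /andP[m_gt0 n_mq] m_min.
apply/idP/idP => [n_xq|/dvdzP[c ->]]; last by rewrite -mulrA dvdz_mull.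
have [t def_t] : exists t : nat, (x %% m%:Z)%Z = t%:Z.
  by exists `|(x %% m%:Z)%Z|%N; rewrite gez0_abs // modz_ge0 // lt0r_neq0.
have t_lt_m : (t < m)%N by rewrite -ltz_nat -def_t ltz_pmod.
have n_tq : (n.+1%:Z %| t%:Z * q)%Z.
  have -> : t%:Z * q = x * q - (x %/ m%:Z)%Z * (m%:Z * q).
    by rewrite -def_t {2}(divz_eq x m%:Z); ring.
  by rewrite rpredB // dvdz_mull.
apply/dvdz_mod0P; rewrite def_t; case: t => // t in def_t t_lt_m n_tq *.
by move: (m_min t.+1 n_tq); rewrite leqNgt t_lt_m.
Qed.

Section MetaplecticCocycle.
Context {R : comNzRingType} {tau : R} {g : int -> R} {n : nat} {q : int}.
Hypotheses (n_gt0 : (0 < n)%N) (g_rel : ztaug_rel n tau g).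
Local Notation m := (nco n q).

Lemma g_mul_congr (x y : int) : (m%:Z %| x - y)%Z -> g (x * q) = g (y * q).
Proof.
case: g_rel => _ g_mod _ _ m_xy; apply: g_mod.
by rewrite eqz_mod_dvd -mulrBl dvdz_mul_nco.
Qed.

Lemma g_mul_dvd (x : int) : (m%:Z %| x)%Z -> g (x * q) = -1.
Proof.
case: g_rel => _ _ _ g0 m_x.
by rewrite (@g_mul_congr x 0) ?subr0 // mul0r.
Qed.

Lemma g_mul_gN (x : int) : ~~ (m%:Z %| x)%Z -> g (x * q) * g (- x * q) = tau ^+ 2.
Proof.
case: g_rel => _ _ g_inv _ m_x; rewrite mulNr; apply: g_inv.
by rewrite eqz_mod_dvd subr0 dvdz_mul_nco.
Qed.

End MetaplecticCocycle.

Section DemazureLusztigLinear.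
Variables (R : comNzRingType) (tau : R) (g : int -> R) (n r : nat)
  (Q : lat r -> int) (ac al : lat r).
Local Notation T := (Tmeta tau g n Q ac al).

Lemma TmetaEw {d : {fset lat r}} {f : {malg R[lat r]}} : (msupp f `<=` d)%fset ->
  T f = \sum_(mu <- d) f@_mu *: Tbasis tau g n Q ac al mu.
Proof.
move=> f_d; apply: big_fset_incl f_d _ => mu _ /mcoeff_outdom ->.
by rewrite scale0r.
Qed.

Lemma Tmeta_is_linear : linear T.
Proof.
move=> c f h; pose d := (msupp f `|` msupp h)%fset.
have f_d : (msupp f `<=` d)%fset by exact: fsubsetUl.
have h_d : (msupp h `<=` d)%fset by exact: fsubsetUr.
have fh_d : (msupp (c *: f + h) `<=` d)%fset.
  by apply: fsubset_trans (msuppD_le _ _) _; apply: fsetUSS => //; exact: msuppZ_le.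
rewrite (TmetaEw fh_d) (TmetaEw f_d) (TmetaEw h_d) scaler_sumr -big_split.
by apply: eq_bigr => mu _; rewrite mcoeffD mcoeffZ scalerDl scalerA.
Qed.

HB.instance Definition _ :=
  GRing.isLinear.Build R {malg R[lat r]} {malg R[lat r]} _ T Tmeta_is_linear.

Lemma Tmeta_Yb mu : T (Yb R mu) = Tbasis tau g n Q ac al mu.
Proof. by rewrite (TmetaEw msuppU_le) big_seq_fset1 mcoeffUU scale1r. Qed.

End DemazureLusztigLinear.

Lemma divn_bracket {m N c : nat} : (c * m <= N < c.+1 * m)%N -> (N %/ m)%N = c.
Proof.
case/andP=> cm_N N_cm.
have m_gt0 : (0 < m)%N by case: m N_cm {cm_N} => //; rewrite muln0.
by apply/eqP; rewrite eqn_leq -ltnS ltn_divLR // leq_divRL // cm_N N_cm.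
Qed.

Section BigMultiples.
Context {V : nmodType} (F : nat -> V) {m N c : nat}.
Hypotheses (m_gt0 : (0 < m)%N) (N_bracket : (c * m <= N < c.+1 * m)%N).

Lemma big_ord_mul_leq :
  \sum_(k < N.+1 | (k * m <= N)%N) F k = \sum_(k < c.+1) F k.
Proof.
have c_N : (c.+1 <= N.+1)%N.
  by case/andP: N_bracket => cmN _; rewrite ltnS (leq_trans _ cmN) ?leq_pmulr.
rewrite [RHS](big_ord_widen _ _ c_N); apply: eq_bigl => k.
by rewrite -leq_divRL // (divn_bracket N_bracket).
Qed.

Lemma big_ord_mul_ltn :
  \sum_(k < N.+2 | (0 < k)%N && (k * m < N.+1)%N) F k = \sum_(k < c) F (c - k)%N.
Proof.
have c_N : (c <= N.+1)%N.
  by case/andP: N_bracket => cmN _; rewrite ltnW // ltnS (leq_trans _ cmN) ?leq_pmulr.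
rewrite big_mkcond big_ord_recl /= add0r -big_mkcond /=.
transitivity (\sum_(k < c) F k.+1).
  rewrite [RHS](big_ord_widen _ (fun k => F k.+1) c_N); apply: eq_bigl => k.
  by rewrite ltnS -leq_divRL // (divn_bracket N_bracket).
by rewrite (reindex_inj rev_ord_inj); apply: eq_bigr => k _ /=; rewrite subnSK.
Qed.

End BigMultiples.

Lemma dpairBZ r (y x z : lat r) (t : int) :
  dpair (y - t *: x) z = dpair y z - t * dpair x z.
Proof. by rewrite /dpair mulmxBl -scalemxAl !mxE. Qed.

(* Locked: otherwise failed matches against these terms during rewriting unfold the
   monoid-algebra representation and become very slow. *)
Fact Ystring_key : unit. Proof. by []. Qed.
Definition Ystring (R : comNzRingType) r (lam ac : lat r) (t : int) : {malg R[lat r]} :=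
  locked_with Ystring_key (Yb R (lam - t *: ac)).
Arguments Ystring R {r}.

Lemma YstringE (R : comNzRingType) r (lam ac : lat r) t :
  Ystring R lam ac t = Yb R (lam - t *: ac).
Proof. by rewrite /Ystring locked_withE. Qed.

Definition Yprogression (R : comNzRingType) r (lam ac : lat r) (m : nat) (s : int)
    (c : nat) : {malg R[lat r]} :=
  \sum_(k < c) Ystring R lam ac (s + (k * m)%N%:Z).
Arguments Yprogression R {r}.

Section YprogressionTheory.
Context {R : comNzRingType} {r : nat} {lam ac : lat r} {m : nat}.
Local Notation Z := (Ystring R lam ac).
Local Notation P := (Yprogression R lam ac m).

Lemma Yprogression0 s : P s 0 = 0.
Proof. exact: big_ord0. Qed.

Lemma Yprogression1 s : P s 1 = Z s.
Proof. by rewrite /Yprogression big_ord1 addr0. Qed.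

Lemma YprogressionSS s c u v : s + m%:Z = u -> s + (c.+1 * m)%N%:Z = v ->
  P s c.+2 = Z s + P u c + Z v.
Proof.
move=> <- <-; rewrite /Yprogression big_ord_recl big_ord_recr /= /bump /= !add1n.
rewrite mul0n addr0 addrA.
suff -> : \sum_(i < c) Z (s + (i.+1 * m)%N%:Z) = \sum_(k < c) Z (s + m%:Z + (k * m)%N%:Z).
  by [].
by apply: eq_bigr => k _; congr (Z _); lia.
Qed.

End YprogressionTheory.

Section LinearEigenvectors.
Variables (R : comNzRingType) (V : lmodType R) (phi : {linear V -> V}) (t : R).

Lemma linear_eigenN1_pair (z0 zj p : V) (gj gNj s s' : R) :
  gj = -1 -> gNj = -1 -> (s + s') *: p = 0 ->
  phi z0 = gj *: zj + s *: p -> phi zj = gNj *: z0 + s' *: p ->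
  phi (z0 + zj) = - (z0 + zj).
Proof.
move=> -> -> ss' phi0 phij; rewrite (linearD phi) phi0 phij !scaleN1r addrACA.
by rewrite -scalerDl ss' addr0 opprD addrC.
Qed.

Lemma linear_eigenN1_twist (z0 zj : V) (gj gNj : R) : gj * gNj = t ->
  phi z0 = gj *: zj + (t - 1) *: z0 -> phi zj = gNj *: z0 ->
  phi (z0 - gj *: zj) = - (z0 - gj *: zj).
Proof.
move=> <- phi0 phij; rewrite (linearB phi) (linearZZ phi) phi0 phij scalerA.
by rewrite scalerBl scale1r opprB addrA addrAC addrK.
Qed.

Lemma linear_eigenN1_quad (z0 zj zr zK pr pm : V) (gj gNj : R) : gj * gNj = t ->
  phi z0 = gj *: zj + (t - 1) *: (z0 + pm + zK) ->
  phi zj = gNj *: z0 + (1 - t) *: pr ->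
  phi zr = gNj *: zK + (t - 1) *: pr ->
  phi zK = gj *: zr + (1 - t) *: pm ->
  phi (z0 - gj *: zj - gj *: zr + zK) = - (z0 - gj *: zj - gj *: zr + zK).
Proof.
move=> gg phi0 phij phir phiK.
rewrite (linearD phi) !(linearB phi) !(linearZZ phi) phi0 phij phir phiK.
rewrite -[_ - _ - _]addrA -opprD.
have -> : gj *: (gNj *: z0 + (1 - t) *: pr) + gj *: (gNj *: zK + (t - 1) *: pr)
          = t *: (z0 + zK).
  rewrite -scalerDr addrACA -scalerDl -[t - 1]opprB addrN scale0r addr0.
  by rewrite -scalerDr scalerA gg.
rewrite [z0 + pm + zK]addrAC scalerDr scalerBl scale1r -[1 - t]opprB scaleNr.
set B := t *: _; set A := (t - 1) *: pm.
rewrite [_ + (_ + A)]addrA [_ + A - B]addrAC addrACA subrr addr0.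
rewrite addrA [_ + B - _]addrAC addrK opprD addrA.
by rewrite opprD !opprB addrC addrA.
Qed.

End LinearEigenvectors.

Section ARootString.
Variables (R : comNzRingType) (tau : R) (g : int -> R) (n r : nat)
  (Q : lat r -> int) (ac al lam : lat r).
Hypothesis ac_al : dpair ac al = 2.
Local Notation m := (nco n (Q ac)).
Local Notation j := (pairrho lam al).
Local Notation T := (Tmeta tau g n Q ac al).
Local Notation Z := (Ystring R lam ac).
Local Notation P := (Yprogression R lam ac m).

Lemma dpair_string t : dpair (lam - t *: ac) al = j - 1 - 2 * t.
Proof. by rewrite dpairBZ ac_al /pairrho; lia. Qed.

Lemma pairrho_string t : pairrho (lam - t *: ac) al = j - 2 * t.
Proof. by rewrite /pairrho dpair_string /pairrho; lia. Qed.

Lemma dotref_string t : dotref ac al (lam - t *: ac) = lam - (j - t) *: ac.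
Proof.
rewrite /dotref {1}/pairrho dpair_string -addrA -opprD -scalerDl.
by congr (_ - _ *: _); lia.
Qed.

(* The output indices [s], [x] (and [b] below) are explicit parameters, so that the
   lemmas can be applied without rewriting integer expressions inside {malg} terms. *)
Lemma Tmeta_Ystring_lt t (c : nat) s x : j - t = s -> j - 2 * t = x ->
  (c * m)%N%:Z <= j - 1 - 2 * t < (c.+1 * m)%N%:Z ->
  T (Z t) = g (x * Q ac) *: Z s + (tau ^+ 2 - 1) *: P t c.+1.
Proof.
move=> <- <- bracket; have [N def_N] : exists N : nat, j - 1 - 2 * t = N%:Z.
  by exists `|(j - 1 - 2 * t)%R|%N; lia.
have N_bracket : (c * m <= N < c.+1 * m)%N by move: bracket; rewrite def_N; lia.
rewrite !YstringE Tmeta_Yb /Tbasis pairrho_string dotref_string dpair_string def_N /=.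
rewrite /Yprogression
  -(big_ord_mul_leq (fun k => Z (t + (k * m)%N%:Z)) (nco_gt0 _ _) N_bracket).
by congr (_ + _ *: _); apply: eq_bigr => k _; rewrite YstringE -addrA -opprD -scalerDl.
Qed.

Lemma Tmeta_Ystring_ge t (c : nat) s x b :
  j - t = s -> j - 2 * t = x -> t - (c * m)%N%:Z = b ->
  (c * m)%N%:Z <= 2 * t - j < (c.+1 * m)%N%:Z ->
  T (Z t) = g (x * Q ac) *: Z s + (1 - tau ^+ 2) *: P b c.
Proof.
move=> <- <- <- bracket; have [N def_N] : exists N : nat, 2 * t - j = N%:Z.
  by exists `|(2 * t - j)%R|%N; lia.
have N_bracket : (c * m <= N < c.+1 * m)%N by move: bracket; rewrite def_N; lia.
rewrite !YstringE Tmeta_Yb /Tbasis pairrho_string dotref_string dpair_string.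
have -> : j - 1 - 2 * t = Negz N by rewrite NegzE; lia.
rewrite /= (big_ord_mul_ltn (fun k => Yb R (lam - t *: ac + (k * m)%N%:Z *: ac))
                            (nco_gt0 _ _) N_bracket).
congr (_ + _ *: _); apply: eq_bigr => k _; rewrite YstringE; congr (Yb R _).
have km_cm : (k * m <= c * m)%N by rewrite leq_mul2r ltnW ?orbT.
have -> : t - (c * m)%N%:Z + (k * m)%N%:Z = t - ((c - k) * m)%N%:Z.
  by rewrite mulnBl; lia.
by rewrite scalerBl opprB addrA addrAC.
Qed.

Hypotheses (n_gt0 : (0 < n)%N) (g_rel : ztaug_rel n tau g).

Lemma Tmeta_eigenN1_dvd : 0 <= j -> (m%:Z %| j)%Z -> T (Z 0 + Z j) = - (Z 0 + Z j).
Proof.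
move=> j_ge0 m_j; have m_gt0 := nco_gt0 n (Q ac).
have gj : g (j * Q ac) = -1 := g_mul_dvd n_gt0 g_rel _ m_j.
have gNj : g (- j * Q ac) = -1 by rewrite (g_mul_dvd n_gt0 g_rel) // rpredN.
have {m_j} [c def_j] : exists c : nat, j = (c * m)%N%:Z.
  by move: m_j; rewrite dvdzE => /dvdnP[c def_c]; exists c; rewrite -def_c; lia.
have TZj : T (Z j) = g (- j * Q ac) *: Z 0 + (1 - tau ^+ 2) *: P 0 c.
  by apply: Tmeta_Ystring_ge; lia.
case: c def_j TZj => [|c] def_j TZj.
  have TZ0 : T (Z 0) = g (j * Q ac) *: Z j + (1 - tau ^+ 2) *: P 0 0.
    by apply: Tmeta_Ystring_ge; lia.
  by apply: linear_eigenN1_pair gj gNj _ TZ0 TZj; rewrite Yprogression0 scaler0.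
have TZ0 : T (Z 0) = g (j * Q ac) *: Z j + (tau ^+ 2 - 1) *: P 0 c.+1.
  by apply: Tmeta_Ystring_lt; lia.
apply: linear_eigenN1_pair gj gNj _ TZ0 TZj.
by rewrite addrA subrK subrr scale0r.
Qed.

Lemma Tmeta_eigenN1_lt : 0 < j < m%:Z ->
  T (Z 0 - g (j * Q ac) *: Z j) = - (Z 0 - g (j * Q ac) *: Z j).
Proof.
move=> /andP[j_gt0 j_lt_m].
have gg : g (j * Q ac) * g (- j * Q ac) = tau ^+ 2.
  by apply: (g_mul_gN n_gt0 g_rel); apply/negP => /dvdz_mod0P; rewrite modz_small; lia.
have TZ0 : T (Z 0) = g (j * Q ac) *: Z j + (tau ^+ 2 - 1) *: P 0 1.
  by apply: Tmeta_Ystring_lt; lia.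
have TZj : T (Z j) = g (- j * Q ac) *: Z 0 + (1 - tau ^+ 2) *: P j 0.
  by apply: Tmeta_Ystring_ge; lia.
rewrite Yprogression1 in TZ0; rewrite Yprogression0 scaler0 addr0 in TZj.
exact: linear_eigenN1_twist gg TZ0 TZj.
Qed.

Lemma Tmeta_eigenN1_gt (rho : int) :
  m%:Z < j -> 0 < rho < m%:Z -> (m%:Z %| j - rho)%Z ->
  T (Z 0 - g (j * Q ac) *: Z j - g (j * Q ac) *: Z rho + Z (j - rho))
  = - (Z 0 - g (j * Q ac) *: Z j - g (j * Q ac) *: Z rho + Z (j - rho)).
Proof.
move=> m_lt_j /andP[rho_gt0 rho_lt_m] m_jrho; have m_gt0 := nco_gt0 n (Q ac).
have gg : g (j * Q ac) * g (- j * Q ac) = tau ^+ 2.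
  apply: (g_mul_gN n_gt0 g_rel); apply/negP => m_j.
  have : (m%:Z %| j - (j - rho))%Z by rewrite rpredB.
  by rewrite subKr => /dvdz_mod0P; rewrite modz_small; lia.
have {m_jrho} [K def_jrho] : exists K : nat, j - rho = (K.+1 * m)%N%:Z.
  move: m_jrho; rewrite dvdzE => /dvdnP[[|K] def_K]; first by move: def_K; lia.
  by exists K; rewrite -def_K; lia.
have g_rho : g ((j - 2 * rho) * Q ac) = g (- j * Q ac).
  by apply: (g_mul_congr n_gt0 g_rel); apply/dvdzP; exists (2 * K.+1)%:Z; lia.
have g_jrho : g ((j - 2 * (j - rho)) * Q ac) = g (j * Q ac).
  by apply: (g_mul_congr n_gt0 g_rel); apply/dvdzP; exists (- (2 * K.+1)%:Z); lia.
have TZ0 : T (Z 0) = g (j * Q ac) *: Z j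
                     + (tau ^+ 2 - 1) *: (Z 0 + P m%:Z K + Z (j - rho)).
  rewrite -(YprogressionSS _ _ _ _ (add0r _)); last by lia.
  by apply: Tmeta_Ystring_lt; lia.
have TZj : T (Z j) = g (- j * Q ac) *: Z 0 + (1 - tau ^+ 2) *: P rho K.+1.
  by apply: Tmeta_Ystring_ge; lia.
have TZr : T (Z rho) = g (- j * Q ac) *: Z (j - rho) + (tau ^+ 2 - 1) *: P rho K.+1.
  by rewrite -g_rho; apply: Tmeta_Ystring_lt; lia.
have TZK : T (Z (j - rho)) = g (j * Q ac) *: Z rho + (1 - tau ^+ 2) *: P m%:Z K.
  by rewrite -g_jrho; apply: Tmeta_Ystring_ge; lia.
exact: linear_eigenN1_quad gg TZ0 TZj TZr TZK.
Qed.

End ARootString.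

Theorem mainTheorem2
  (R : comNzRingType) (tau : R) (g : int -> R) (n : nat)
  (r : nat) (I : finType) (ac al : I -> lat r) (Q : lat r -> int)
  (n_pos : (0 < n)%N)
  (Hring : ztaug_rel n tau g)
  (Hcartan : finite_type_cartan (cartan ac al))
  (HQ : quadratic_form Q)
  (HW : W_invariant ac al Q)
  (Hsc : twisted_simply_connected n Q ac)
  (lam : lat r) (a : I) :
  let m : nat := nco n (Q (ac a)) in
  let j : int := pairrho lam (al a) in
  let T := Tmeta tau g n Q (ac a) (al a) in
  let Yl := Yb R lam in
  let Yls := Yb R (dotref (ac a) (al a) lam) in
  [/\ (* (1) *)
      (0 <= j -> (j == 0 %[mod m%:Z])%Z ->
         T (Yl + Yls) = - (Yl + Yls)),
      (* (2) *)
      (0 < j -> j < m%:Z ->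
         let gg := g (j * Q (ac a)) in
         T (Yl - gg *: Yls) = - (Yl - gg *: Yls)) &
      (* (3) *)
      (m%:Z < j -> (j != 0 %[mod m%:Z])%Z ->
         let lam1 := lam - (j %% m%:Z)%Z *: ac a in
         let gg := g (j * Q (ac a)) in
         let u := Yl - gg *: Yls - gg *: Yb R lam1
                  + Yb R (dotref (ac a) (al a) lam1) in
         T u = - u)].
Proof.
move=> m j T Yl Yls.
have ac_al : dpair (ac a) (al a) = 2 by case: Hcartan => diag _ _ _; exact: diag.
have -> : Yl = Ystring R lam (ac a) 0 by rewrite YstringE scale0r subr0.
have -> : Yls = Ystring R lam (ac a) j by rewrite YstringE.
split=> [j_ge0 | j_gt0 j_lt_m gg | m_lt_j j_mod lam1 gg u].
- by rewrite eqz_mod_dvd subr0; apply: Tmeta_eigenN1_dvd.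
- by apply: Tmeta_eigenN1_lt => //; rewrite j_gt0.
have m_gt0 : 0 < m%:Z by rewrite ltz_nat nco_gt0.
rewrite /u /lam1 dotref_string // -!YstringE.
apply: Tmeta_eigenN1_gt => //.
  rewrite mod0z in j_mod; have := modz_ge0 j (lt0r_neq0 m_gt0).
  by have := ltz_pmod j m_gt0; lia.
by apply/dvdzP; exists (j %/ m%:Z)%Z; have := divz_eq j m%:Z; lia.
Qed.
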